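(* Let $\lambda \in P$. For every $\lhd \in \mathrm{RO}(\lambda, \Delta^{+})$ the total order $\prec_{\lhd}$ on $w(\lambda)\Delta^{+}$ belongs to $\mathrm{RO}(\lambda, w(\lambda)\Delta^{+})$, and the assignment $\lhd \mapsto \prec_{\lhd}$ is a bijection from $\mathrm{RO}(\lambda, \Delta^{+})$ onto $\mathrm{RO}(\lambda, w(\lambda)\Delta^{+})$.
   Context: Let $\mathfrak{g}$ be a finite-dimensional complex simple Lie algebra with root system $\Delta$, positive roots $\Delta^{+}$, Weyl group $W$ (with Bruhat order), weight lattice $P$, and pairing $\langle\cdot,\cdot\rangle$; $\alpha^\vee$ is the coroot of $\alpha$. For $\lambda \in P$ set $\Delta^{+}(\lambda)_{>0}$, $\Delta^{+}(\lambda)_{=0}$, $\Delta^{+}(\lambda)_{<0}$ to be the sets of $\alpha \in \Delta^{+}$ with $\langle \lambda, \alpha^{\vee}\rangle$ respectively $>0$, $=0$, $<0$. Let $\lambda_{+}$ be the dominant weight in $W\lambda$ and $w(\lambda)$ the Bruhat-maximal element of $\{w \in W \mid w\lambda_{+} = \lambda\}$; one has $w(\lambda)\Delta^{+} = \Delta^{+}(\lambda)_{>0} \sqcup (-\Delta^{+}(\lambda)_{<0}) \sqcup (-\Delta^{+}(\lambda)_{=0})$. For $w \in W$, a total order $\prec$ on $w\Delta^{+}$ is a reflection order if for all $\alpha,\beta \in w\Delta^{+}$ with $\alpha+\beta \in w\Delta^{+}$, either $\alpha \prec \alpha+\beta \prec \beta$ or $\beta \prec \alpha+\beta \prec \alpha$.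 Let $\mathrm{RO}(\lambda, \Delta^{+})$ be the set of reflection orders $\lhd$ on $\Delta^{+}$ such that $\alpha \lhd \beta \lhd \gamma$ for all $\alpha \in \Delta^{+}(\lambda)_{<0}$, $\beta \in \Delta^{+}(\lambda)_{=0}$, $\gamma \in \Delta^{+}(\lambda)_{>0}$. Let $\mathrm{RO}(\lambda, w(\lambda)\Delta^{+})$ be the set of reflection orders $\prec$ on $w(\lambda)\Delta^{+}$ such that $\gamma \prec -\alpha \prec -\beta$ for all $\gamma \in \Delta^{+}(\lambda)_{>0}$, $\alpha \in \Delta^{+}(\lambda)_{<0}$, $\beta \in \Delta^{+}(\lambda)_{=0}$. For $\lhd \in \mathrm{RO}(\lambda,\Delta^{+})$, the total order $\prec_{\lhd}$ on $w(\lambda)\Delta^{+}$ is defined as follows: every element of $\Delta^{+}(\lambda)_{>0}$ precedes every element of $-\Delta^{+}(\lambda)_{<0}$, which precedes every element of $-\Delta^{+}(\lambda)_{=0}$; on $\Delta^{+}(\lambda)_{>0}$, $\gamma \prec_{\lhd} \gamma'$ iff $\gamma \lhd \gamma'$; on $-\Delta^{+}(\lambda)_{<0}$ and on $-\Delta^{+}(\lambda)_{=0}$, $-\alpha \prec_{\lhd} -\alpha'$ iff $\alpha \lhd \alpha'$. *)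

(* Root systems of finite-dimensional complex simple Lie
   algebras are modelled as irreducible reduced crystallographic root systems
   in the Euclidean space 'rV[R]_n (standard dot product), R a real field. *)
From HB Require Import structures.
From mathcomp Require Import all_boot all_order all_algebra.
Set Implicit Arguments. Unset Strict Implicit. Unset Printing Implicit Defensive.
Import Order.TTheory GRing.Theory Num.Theory.
Local Open Scope ring_scope.

Section RootSystems.
Variables (R : realFieldType) (n : nat).
Notation V := 'rV[R]_n.

Definition dot (u v : V) : R := (u *m v^T) 0 0.

Definition pairing (v a : V) : R := 2 * dot v a / dot a a.

Definition is_integer (x : R) : Prop := exists z : int, x = z%:~R.

(* reflection s_a as a matrix acting on row vectors: v *m refl_mx a = s_a v *)
Definition refl_mx (a : V) : 'M[R]_n := 1%:M - (2 / dot a a) *: (a^T *m a).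

(* Irreducible reduced crystallographic root system spanning V *)
Definition simple_root_system (roots : seq V) : Prop :=
  [/\ uniq roots, roots != [::] & (0 : V) \notin roots] /\
  (forall v : V, (forall a, a \in roots -> dot v a = 0) -> v = 0) /\
  (forall a b, a \in roots -> b \in roots -> b *m refl_mx a \in roots) /\
  (forall a b, a \in roots -> b \in roots -> is_integer (pairing b a)) /\
  (forall a (c : R), a \in roots -> c *: a \in roots -> c = 1 \/ c = -1) /\
  (forall A : pred V,
        (forall a b, a \in roots -> b \in roots -> A a -> ~~ A b -> dot a b = 0) ->
        (forall a, a \in roots -> A a) \/ (forall a, a \in roots -> ~~ A a)).

Definition positive_system (roots pos : seq V) : Prop :=
  uniq pos /\ exists f : V, (forall a, a \in roots -> dot f a != 0) /\
    (forall a, (a \in pos) = (a \in roots) && (0 < dot f a)).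

Definition in_weight_lattice (roots : seq V) (l : V) : Prop :=
  forall a, a \in roots -> is_integer (pairing l a).

Definition in_weyl (roots : seq V) (w : 'M[R]_n) : Prop :=
  exists ts : seq V, all (mem roots) ts /\
    w = foldr (fun t M => refl_mx t *m M) 1%:M ts.

Definition weyl_length (roots pos : seq V) (w : 'M[R]_n) : nat :=
  count (fun a => a *m w \notin pos) pos.

Definition bruhat_step (roots pos : seq V) (u v : 'M[R]_n) : Prop :=
  exists2 b, b \in roots & v = u *m refl_mx b /\
    (weyl_length roots pos u < weyl_length roots pos v)%N.

Inductive bruhat_le (roots pos : seq V) : 'M[R]_n -> 'M[R]_n -> Prop :=
| bruhat_refl u : bruhat_le roots pos u u
| bruhat_trans u v w : bruhat_step roots pos u v -> bruhat_le roots pos v w ->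
    bruhat_le roots pos u w.

Definition posgt0 (pos : seq V) (l a : V) : bool := (a \in pos) && (0 < pairing l a).
Definition poseq0 (pos : seq V) (l a : V) : bool := (a \in pos) && (pairing l a == 0).
Definition poslt0 (pos : seq V) (l a : V) : bool := (a \in pos) && (pairing l a < 0).

(* A total order on a finite set S is encoded as a duplicate-free list s
   enumerating S; x precedes y iff x occurs before y. *)
Definition prec (s : seq V) (x y : V) : bool := (index x s < index y s)%N.

Definition total_order_on (S s : seq V) : Prop := uniq s /\ perm_eq s S.

Definition reflection_order (S s : seq V) : Prop :=
  total_order_on S s /\
  forall a b, a \in S -> b \in S -> a + b \in S ->
    (prec s a (a + b) && prec s (a + b) b) || (prec s b (a + b) && prec s (a + b) a).

Definition RO_pos (pos : seq V) (l : V) (s : seq V) : Prop :=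
  reflection_order pos s /\
  (forall a b c, poslt0 pos l a -> poseq0 pos l b -> posgt0 pos l c ->
     prec s a b && prec s b c) /\
  (forall a b, poslt0 pos l a -> poseq0 pos l b -> prec s a b) /\
  (forall b c, poseq0 pos l b -> posgt0 pos l c -> prec s b c) /\
  (forall a c, poslt0 pos l a -> posgt0 pos l c -> prec s a c).

Definition act_set (w : 'M[R]_n) (pos : seq V) : seq V := [seq a *m w | a <- pos].

Definition RO_w (pos : seq V) (l : V) (w : 'M[R]_n) (t : seq V) : Prop :=
  reflection_order (act_set w pos) t /\
  (forall c a b, posgt0 pos l c -> poslt0 pos l a -> poseq0 pos l b ->
     prec t c (- a) && prec t (- a) (- b)) /\
  (forall c a, posgt0 pos l c -> poslt0 pos l a -> prec t c (- a)) /\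
  (forall a b, poslt0 pos l a -> poseq0 pos l b -> prec t (- a) (- b)) /\
  (forall c b, posgt0 pos l c -> poseq0 pos l b -> prec t c (- b)).

Definition induced_order (pos : seq V) (l : V) (s : seq V) : seq V :=
  [seq a <- s | posgt0 pos l a] ++
  [seq - a | a <- s & poslt0 pos l a] ++
  [seq - a | a <- s & poseq0 pos l a].

End RootSystems.

(* A reflection order in RO(lambda, Delta^+) lists u := Delta^+(lambda)_{<=0}
   before v := Delta^+(lambda)_{>0}, and prec_lhd is the rotation v ++ (-u).
   For any enumeration u ++ v of a set in which no two or three elements sum to
   zero, rotation preserves the reflection-order condition: when a, b, a + b do
   not all lie on one side, one of the relations (-b) + (a + b) = a or
   a + (-(a + b)) = -b holds inside u ++ v, and there u precedes v.  Reversing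
   both orders turns the inverse rotation into a rotation, which gives
   surjectivity, and injectivity holds because u and v are read back off v ++ (-u).

   It remains to see that v ++ (-u) enumerates w(lambda)Delta^+.  For a positive
   root a, <lambda, (w(lambda)a)^vee> = <lambda_+, a^vee> >= 0.  If w(lambda)a > 0
   this cannot vanish, for otherwise w(lambda)s_a still maps lambda_+ to lambda
   and is strictly longer than w(lambda), against Bruhat maximality.  That
   l(w s_a) > l(w) when w a > 0 is proved by counting inversions along the
   involution x |-> +-s_a x of Delta^+. *)

From mathcomp Require Import all_boot all_order all_algebra.
From mathcomp Require Import ring lra zify.
Import Order.TTheory GRing.Theory Num.Theory.
Local Open Scope ring_scope.
Set Implicit Arguments. Unset Strict Implicit. Unset Printing Implicit Defensive.

Lemma index_rev (T : eqType) (x : T) (s : seq T) : uniq s -> x \in s ->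
  index x (rev s) = (size s - (index x s).+1)%N.
Proof.
move=> us xs; have ltx : (index x s < size s)%N by rewrite index_mem.
rewrite -[X in index X (rev s)](_ : nth x (rev s) (size s - (index x s).+1) = x).
  by rewrite index_uniq ?rev_uniq ?size_rev //; lia.
by rewrite nth_rev; last lia; rewrite (_ : (_ - _)%N = index x s) ?nth_index //; lia.
Qed.

Lemma filter_cat_l (T : eqType) (p : pred T) s1 s2 :
  all p s1 -> ~~ has p s2 -> filter p (s1 ++ s2) = s1.
Proof.
move=> /all_filterP s1p; rewrite has_filter negbK filter_cat s1p => /eqP ->.
by rewrite cats0.
Qed.

Lemma filter_cat_r (T : eqType) (p : pred T) s1 s2 :
  ~~ has p s1 -> all p s2 -> filter p (s1 ++ s2) = s2.
Proof. by rewrite has_filter negbK filter_cat => /eqP -> /all_filterP. Qed.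

Section Orders.
Variables (R : realFieldType) (n : nat).
Local Notation V := 'rV[R]_n.
Implicit Types (S s u v : seq V) (x y : V).

Lemma prec_asym s x y : prec s x y -> ~~ prec s y x.
Proof. by rewrite /prec -leqNgt => /ltnW. Qed.

Lemma prec_cat_lr s1 s2 x y : x \in s1 -> y \notin s1 -> prec (s1 ++ s2) x y.
Proof.
move=> xs ys; rewrite /prec !index_cat xs (negbTE ys).
by rewrite (leq_trans _ (leq_addr _ _)) ?index_mem.
Qed.

Lemma prec_catr s1 s2 x y : x \notin s1 -> y \notin s1 ->
  prec (s1 ++ s2) x y = prec s2 x y.
Proof. by move=> xs ys; rewrite /prec !index_cat (negbTE xs) (negbTE ys) ltn_add2l. Qed.

Lemma prec_catl s1 s2 x y : x \in s1 -> y \in s1 ->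
  prec (s1 ++ s2) x y = prec s1 x y.
Proof. by move=> xs ys; rewrite /prec !index_cat xs ys. Qed.

Lemma prec_mapN s x y : prec [seq - z | z <- s] x y = prec s (- x) (- y).
Proof. by rewrite /prec -[x]opprK -[y]opprK !(index_map oppr_inj) !opprK. Qed.

Lemma prec_filter (p : pred V) s x y : p x -> p y ->
  prec (filter p s) x y = prec s x y.
Proof.
rewrite /prec => px py; elim: s => //= z s IH.
case pz: (p z) => /=; first by case: (z == x); case: (z == y).
have ne w : p w -> (z == w) = false by move=> pw; apply/eqP=> e; rewrite e pw in pz.
by rewrite !ne.
Qed.

Lemma prec_rev s x y : uniq s -> x \in s -> y \in s -> prec (rev s) x y = prec s y x.
Proof.
move=> us xs ys; rewrite /prec !index_rev //.
by have := index_mem x s; have := index_mem y s; rewrite xs ys; lia.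
Qed.

Lemma mem_mapN s x : (x \in [seq - z | z <- s]) = (- x \in s).
Proof. by rewrite -[x in LHS]opprK mem_map //; exact: oppr_inj. Qed.

Lemma cat_filterC (p : pred V) s : uniq s ->
  {in s &, forall x y, p x -> ~~ p y -> prec s x y} ->
  filter p s ++ filter (predC p) s = s.
Proof.
elim: s => //= z s IH /andP[zs us] zs_prec.
have ne x : x \in s -> (z == x) = false by apply: contraTF => /eqP <-.
have s_prec x y : x \in s -> y \in s -> prec (z :: s) x y = prec s x y.
  by move=> xs ys; rewrite /prec /= !ne.
case pz: (p z) => /=.
  congr (_ :: _); apply: IH => // x y xs ys px npy.
  by rewrite -s_prec // zs_prec // inE ?xs ?ys orbT.
have np x : x \in s -> ~~ p x.
  move=> xs; apply/negP => px.
  have := zs_prec x z; rewrite !inE xs eqxx orbT pz => /(_ isT isT px isT).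
  by rewrite /prec /= eqxx ne.
rewrite (eq_in_filter (a2 := pred0)) ?filter_pred0 => [/=|x /np /negbTE //].
by congr (_ :: _); apply/all_filterP/allP.
Qed.

Definition sum_between s x y :=
  (prec s x (x + y) && prec s (x + y) y) || (prec s y (x + y) && prec s (x + y) x).

Lemma sum_betweenC s x y : sum_between s x y = sum_between s y x.
Proof. by rewrite /sum_between addrC orbC. Qed.

Lemma reflection_order_perm S1 S2 s : perm_eq S1 S2 ->
  reflection_order S1 s -> reflection_order S2 s.
Proof.
move=> e [[us es] between]; split; first by split; rewrite // (perm_trans es e).
by move=> a b; rewrite -!(perm_mem e); exact: between.
Qed.

Lemma reflection_order_rev S s : reflection_order S s -> reflection_order S (rev s).
Proof.
move=> [[us es] between]; split; first by split; rewrite ?rev_uniq ?perm_rev.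
move=> a b aS bS abS; have sS := perm_mem es.
rewrite !prec_rev ?sS //.
by case/orP: (between a b aS bS abS) => /andP[-> ->]; rewrite ?orbT.
Qed.

(* What reflection orders need from [S] lying in an open half-space: no two or
   three of its elements sum to zero. *)
Definition pointed S :=
  {in S, forall x, - x \notin S} /\ {in S &, forall x y, - (x + y) \notin S}.

Section Rotate.
Variables S u v : seq V.
Hypotheses (S_pointed : pointed S) (uv_order : reflection_order S (u ++ v)).
Local Notation s := (u ++ v).
Local Notation t := (v ++ [seq - x | x <- u]).

Lemma rotate_memS x : (x \in u) || (x \in v) = (x \in S).
Proof. by case: uv_order => [[_ /perm_mem <-] _]; rewrite mem_cat. Qed.

Lemma rotate_disjoint x : x \in v -> x \notin u.
Proof.
by case: uv_order => [[]]; rewrite cat_uniq => /and3P[_ /hasPn uv _] _ _ /uv.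
Qed.

Lemma rotate_notin x : - x \in u -> x \notin v.
Proof.
move=> xu; apply/negP => xv.
by have := S_pointed.1 x; rewrite -!rotate_memS xu xv orbT => /(_ isT).
Qed.

Lemma rotate_uniq : uniq t.
Proof.
case: uv_order => [[]]; rewrite !cat_uniq => /and3P[uu _ uv] _ _.
rewrite uv map_inj_uniq ?uu ?andbT /=; last exact: oppr_inj.
by apply/hasPn => x; rewrite mem_mapN; exact: rotate_notin.
Qed.

Lemma prec_rotate_v x y : x \in v -> y \in v -> prec t x y = prec s x y.
Proof. by move=> xv yv; rewrite prec_catl // prec_catr ?rotate_disjoint. Qed.

Lemma prec_rotate_u x y : - x \in u -> - y \in u -> prec t x y = prec s (- x) (- y).
Proof. by move=> xu yu; rewrite prec_catr ?rotate_notin // prec_mapN prec_catl. Qed.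

Lemma sum_between_uv a b : a \in S -> b \in S -> a + b \in S -> sum_between s a b.
Proof. by case: uv_order => _; apply. Qed.

Lemma sum_between_rotate_mixed a b : a \in v -> - b \in u ->
  (a + b \in v) || (- (a + b) \in u) -> sum_between t a b.
Proof.
move=> av bu; have ba : prec s (- b) a by rewrite prec_cat_lr ?rotate_disjoint.
case/orP => [abv | abu].
  have := @sum_between_uv (- b) (a + b); rewrite /sum_between addrCA addNr addr0.
  rewrite -!rotate_memS av bu abv !orbT => /(_ isT isT isT).
  rewrite ba (negbTE (prec_asym ba)) andbF orbF => /= ab.
  by rewrite prec_rotate_v // ab prec_cat_lr ?rotate_notin ?opprK.
have := @sum_between_uv a (- (a + b)).
rewrite /sum_between (_ : a - (a + b) = - b); last by rewrite opprD addrA subrr add0r.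
rewrite -!rotate_memS av bu abu !orbT => /(_ isT isT isT).
rewrite ba (negbTE (prec_asym ba)) /= andbT => abb.
rewrite [prec t (a + b) b]prec_rotate_u ?opprK // abb andbT.
by rewrite prec_cat_lr ?rotate_notin.
Qed.

Lemma reflection_order_rotate : reflection_order t t.
Proof.
split; first by split; [exact: rotate_uniq | exact: perm_refl].
move=> a b; rewrite !mem_cat !mem_mapN.
case av: (a \in v); case bv: (b \in v) => /= au bu abt.
- have abv : a + b \in v.
    case/orP: abt => // abu.
    have := S_pointed.2 a b; rewrite -!rotate_memS av bv abu !orbT.
    by move=> /(_ isT isT).
  have := @sum_between_uv a b; rewrite -!rotate_memS av bv abv !orbT.
  by move=> /(_ isT isT isT); rewrite /sum_between !prec_rotate_v.
- exact: sum_between_rotate_mixed.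
- rewrite -/(sum_between t a b) sum_betweenC.
  by apply: sum_between_rotate_mixed; rewrite // addrC.
have abu : - (a + b) \in u.
  case/orP: abt => // abv.
  have := S_pointed.2 (- a) (- b); rewrite -opprD opprK -!rotate_memS au bu abv.
  by rewrite !orbT => /(_ isT isT).
have := @sum_between_uv (- a) (- b).
rewrite /sum_between -opprD -!rotate_memS au bu abu.
by move=> /(_ isT isT isT); rewrite !prec_rotate_u ?opprK.
Qed.

End Rotate.

End Orders.

Section Reflections.
Variables (R : realFieldType) (n : nat).
Local Notation V := 'rV[R]_n.
Implicit Types a u v w x y : V.

Lemma dotC u v : dot u v = dot v u.
Proof. by rewrite /dot !mxE; apply: eq_bigr => i _; rewrite !mxE mulrC. Qed.

Lemma dotDl u v w : dot (u + v) w = dot u w + dot v w.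
Proof. by rewrite /dot mulmxDl mxE. Qed.

Lemma dotNl u w : dot (- u) w = - dot u w.
Proof. by rewrite /dot mulNmx mxE. Qed.

Lemma dotZl (c : R) u w : dot (c *: u) w = c * dot u w.
Proof. by rewrite /dot -scalemxAl mxE. Qed.

Lemma dotBl u v w : dot (u - v) w = dot u w - dot v w.
Proof. by rewrite dotDl dotNl. Qed.

Lemma dotDr u v w : dot w (u + v) = dot w u + dot w v.
Proof. by rewrite dotC dotDl !(dotC w). Qed.

Lemma dotNr u w : dot w (- u) = - dot w u.
Proof. by rewrite dotC dotNl dotC. Qed.

Lemma dotZr (c : R) u w : dot w (c *: u) = c * dot w u.
Proof. by rewrite dotC dotZl dotC. Qed.

Lemma dotBr u v w : dot w (u - v) = dot w u - dot w v.
Proof. by rewrite dotDr dotNr. Qed.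

Lemma dot_self_gt0 u : u != 0 -> 0 < dot u u.
Proof.
move=> u_neq0; have -> : dot u u = \sum_i u 0 i * u 0 i.
  by rewrite /dot mxE; apply: eq_bigr => i _; rewrite mxE.
have sq_ge0 i : 0 <= u 0 i * u 0 i by rewrite -expr2 sqr_ge0.
rewrite lt_def sumr_ge0 // andbT; apply: contra u_neq0 => /eqP sum0.
apply/eqP/rowP => i; rewrite mxE; apply/eqP.
by rewrite -sqrf_eq0 expr2 (psumr_eq0P (fun j _ => sq_ge0 j) sum0).
Qed.

Lemma pairingNr v a : pairing v (- a) = - pairing v a.
Proof. by rewrite /pairing dotNl !dotNr opprK mulrN mulNr. Qed.

Lemma reflE x a : x *m refl_mx a = x - pairing x a *: a.
Proof.
rewrite /refl_mx mulmxBr mulmx1 -scalemxAr mulmxA [x *m a^T]mx11_scalar.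
by rewrite mul_scalar_mx scalerA /pairing mulrAC.
Qed.

Lemma refl_self a : a != 0 -> a *m refl_mx a = - a.
Proof.
move=> a_neq0; have := dot_self_gt0 a_neq0; rewrite reflE /pairing => /gt_eqF/negbT aa.
by rewrite mulfK // scaler_nat mulr2n opprD addrA subrr add0r.
Qed.

Lemma reflK a x : a != 0 -> x *m refl_mx a *m refl_mx a = x.
Proof.
move=> a_neq0; have aa : dot a a != 0 by rewrite gt_eqF ?dot_self_gt0.
rewrite !reflE; have -> : pairing (x - pairing x a *: a) a = - pairing x a.
  by rewrite /pairing dotBl dotZl; field.
by rewrite scaleNr opprK subrK.
Qed.

Lemma refl_dot a x y : a != 0 -> dot (x *m refl_mx a) (y *m refl_mx a) = dot x y.
Proof.
move=> a_neq0; have aa : dot a a != 0 by rewrite gt_eqF ?dot_self_gt0.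
rewrite !reflE !(dotBl, dotBr, dotZl, dotZr) /pairing (dotC a y).
by field.
Qed.

End Reflections.

Section WeylGroup.
Variables (R : realFieldType) (n : nat) (roots : seq 'rV[R]_n).
Local Notation V := 'rV[R]_n.
Hypotheses (roots_neq0 : (0 : V) \notin roots)
  (roots_refl : forall a b, a \in roots -> b \in roots -> b *m refl_mx a \in roots).

Lemma root_neq0 a : a \in roots -> a != 0.
Proof. by apply: contraTneq => ->. Qed.

Lemma rootN a : a \in roots -> - a \in roots.
Proof. by move=> a_root; rewrite -refl_self ?root_neq0 ?roots_refl. Qed.

Section Element.
Variable w : 'M[R]_n.
Hypothesis w_weyl : in_weyl roots w.

Lemma in_weyl_dot x y : dot (x *m w) (y *m w) = dot x y.
Proof.
case: w_weyl => ts [+ ->]; elim: ts x y => [|t ts IH] x y /=; first by rewrite !mulmx1.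
by case/andP=> t_root /IH; rewrite !mulmxA => ->; rewrite refl_dot ?root_neq0.
Qed.

Lemma in_weyl_pairing x y : pairing (x *m w) (y *m w) = pairing x y.
Proof. by rewrite /pairing !in_weyl_dot. Qed.

Lemma in_weyl_root x : x \in roots -> x *m w \in roots.
Proof.
case: w_weyl => ts [+ ->]; elim: ts x => [|t ts IH] x /=; first by rewrite mulmx1.
by case/andP=> t_root /IH IHts x_root; rewrite mulmxA IHts ?roots_refl.
Qed.

Lemma in_weyl_inj : injective (fun x : V => x *m w).
Proof.
move=> x y /= e; apply/eqP; rewrite -subr_eq0; apply/negPn/negP => /dot_self_gt0.
by rewrite -in_weyl_dot mulmxBl e subrr /dot mul0mx mxE ltxx.
Qed.

Lemma in_weyl_onto a : uniq roots -> a \in roots -> exists2 b, b \in roots & b *m w = a.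
Proof.
move=> roots_uniq a_root; suff: a \in [seq x *m w | x <- roots].
  by case/mapP=> b b_root ->; exists b.
have w_uniq : uniq [seq x *m w | x <- roots].
  by rewrite map_inj_uniq //; exact: in_weyl_inj.
have w_sub : {subset [seq x *m w | x <- roots] <= roots}.
  by move=> _ /mapP[x x_root ->]; exact: in_weyl_root.
by have [_ ->] := uniq_min_size w_uniq w_sub (eq_leq (esym (size_map _ _))).
Qed.

Lemma act_set_pointed S : pointed S -> pointed (act_set w S).
Proof.
move=> [S_opp S_sum].
split=> [_ /mapP[x xS ->] | _ _ /mapP[x xS ->] /mapP[y yS ->]].
  by rewrite -mulNmx (mem_map in_weyl_inj) S_opp.
by rewrite -mulmxDl -mulNmx (mem_map in_weyl_inj) S_sum.
Qed.

Lemma in_weyl_mulr a : a \in roots -> in_weyl roots (w *m refl_mx a).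
Proof.
case: w_weyl => ts [ts_roots ->] a_root; exists (ts ++ [:: a]).
rewrite all_cat ts_roots /= a_root foldr_cat /= mulmx1; split=> //.
by elim: ts {ts_roots} => [|t ts IH] /=; rewrite ?mul1mx // -mulmxA IH.
Qed.

End Element.

Variables (pos : seq V) (f : V).
Hypotheses (pos_uniq : uniq pos)
  (pos_def : forall a, (a \in pos) = (a \in roots) && (0 < dot f a))
  (f_regular : forall a, a \in roots -> dot f a != 0).

Lemma pos_root a : a \in pos -> a \in roots.
Proof. by rewrite pos_def => /andP[]. Qed.

Lemma pos_dot_gt0 a : a \in pos -> 0 < dot f a.
Proof. by rewrite pos_def => /andP[]. Qed.

Lemma pos_pointed : pointed pos.
Proof.
split=> [x|x y] /pos_dot_gt0 fx; last move=> /pos_dot_gt0 fy.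
  by apply: contraTN fx => /pos_dot_gt0; rewrite dotNr oppr_gt0 -leNgt => /ltW.
by apply/negP => /pos_dot_gt0; rewrite dotNr dotDr; lra.
Qed.

Lemma notin_posE a : a \in roots -> (a \notin pos) = (- a \in pos).
Proof.
move=> a_root; rewrite !pos_def a_root rootN //= dotNr oppr_gt0 -leNgt.
by rewrite le_eqVlt (negbTE (f_regular a_root)).
Qed.

Lemma weyl_length_bruhat u v : bruhat_le roots pos u v ->
  (weyl_length roots pos u <= weyl_length roots pos v)%N.
Proof. by elim=> // {}u {}v w [b _ [_ /ltnW uv]] _; exact: leq_trans uv. Qed.

Section LengthIncrease.
Variables (w : 'M[R]_n) (b : V).
Hypotheses (w_weyl : in_weyl roots w) (b_pos : b \in pos) (bw_pos : b *m w \in pos).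
Local Notation sb x := (x *m refl_mx b).

(* [phi x = +-(s_b x)] is an involution of [pos] fixing [b]; since [w b > 0], it
   sends the inversions of [w] among those of [s_b] to non-inversions of [w]. *)
Let phi (x : V) : V := if sb x \in pos then sb x else - sb x.
Let inv_refl (x : V) := sb x \notin pos.
Let inv_w (x : V) := x *m w \notin pos.

Lemma phi_pos (x : V) : x \in pos -> phi x \in pos.
Proof.
by move=> x_pos; rewrite /phi; case: ifPn; rewrite // notin_posE ?roots_refl ?pos_root.
Qed.

Lemma refl_phi (x : V) : x \in pos -> sb (phi x) = if inv_refl x then - x else x.
Proof.
have b_neq0 := root_neq0 (pos_root b_pos).
by rewrite /phi /inv_refl; case: ifP; rewrite ?mulNmx reflK.
Qed.

Lemma phiK (x : V) : x \in pos -> phi (phi x) = x.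
Proof.
move=> x_pos; rewrite {1}/phi refl_phi //; case: (inv_refl x); last by rewrite x_pos.
by rewrite (negbTE (pos_pointed.1 x x_pos)) opprK.
Qed.

Lemma perm_phi : perm_eq [seq phi x | x <- pos] pos.
Proof.
apply: uniq_perm => //.
  by rewrite map_inj_in_uniq // => x y x_pos y_pos e; rewrite -(phiK x_pos) e phiK.
move=> x; apply/mapP/idP => [[y y_pos ->]|x_pos]; first exact: phi_pos.
by exists (phi x); rewrite ?phi_pos ?phiK.
Qed.

Lemma weyl_length_refl : weyl_length roots pos (w *m refl_mx (b *m w)) =
  count (fun x => inv_refl x (+) inv_w x) pos.
Proof.
have wsE (x : V) : x *m (w *m refl_mx (b *m w)) = sb x *m w.
  by rewrite mulmxA !reflE mulmxBl -scalemxAl in_weyl_pairing.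
rewrite /weyl_length -(permP perm_phi) count_map; apply: eq_in_count => x x_pos /=.
rewrite wsE refl_phi //; case: (inv_refl x) => //=.
by rewrite mulNmx -notin_posE ?in_weyl_root ?pos_root.
Qed.

Lemma inv_w_phi (x : V) : x \in pos -> inv_refl x -> inv_w x -> ~~ inv_w (phi x).
Proof.
move=> x_pos x_inv; rewrite /inv_w notin_posE ?in_weyl_root ?pos_root // negbK.
move=> /pos_dot_gt0; rewrite dotNr => fxw.
have := pos_dot_gt0 (phi_pos x_pos).
rewrite pos_def in_weyl_root ?pos_root ?phi_pos //=.
rewrite /phi (negbTE x_inv) reflE opprB mulmxBl -scalemxAl !dotBr !dotZr => fphi.
have fx := pos_dot_gt0 x_pos; have fb := pos_dot_gt0 b_pos.
have k_gt0 : 0 < pairing x b by rewrite -(pmulr_lgt0 _ fb); lra.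
have := mulr_gt0 k_gt0 (pos_dot_gt0 bw_pos); lra.
Qed.

Lemma inversions_count_lt :
  (count (predI inv_refl inv_w) pos < count (predI inv_refl (predC inv_w)) pos)%N.
Proof.
have sb_b : sb b = - b by rewrite refl_self ?root_neq0 ?pos_root.
have phi_b : phi b = b by rewrite /phi sb_b (negbTE (pos_pointed.1 b b_pos)) opprK.
rewrite -!size_filter; set inv_in := filter (predI inv_refl inv_w) pos.
have in_pos x : x \in inv_in -> x \in pos by rewrite mem_filter => /andP[].
have img_uniq : uniq (b :: [seq phi x | x <- inv_in]).
  have phi_inj : {in inv_in &, injective phi}.
    by move=> x y /in_pos x_pos /in_pos y_pos e; rewrite -(phiK x_pos) e phiK.
  rewrite /= map_inj_in_uniq ?filter_uniq // andbT.
  apply/mapP=> -[x]; rewrite mem_filter => /andP[/andP[_ xw_inv] x_pos] e.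
  by move: xw_inv; rewrite -(phiK x_pos) -e phi_b /inv_w bw_pos.
have img_sub : {subset b :: [seq phi x | x <- inv_in] <=
    filter (predI inv_refl (predC inv_w)) pos}.
  move=> y; rewrite inE mem_filter => /predU1P[->|/mapP[x]].
    by rewrite /= /inv_refl /inv_w sb_b (pos_pointed.1 b b_pos) bw_pos b_pos.
  rewrite mem_filter => /andP[/andP[x_inv xw_inv] x_pos] ->.
  rewrite /= inv_w_phi // phi_pos // !andbT /inv_refl refl_phi // x_inv.
  exact: pos_pointed.1.
by have := uniq_leq_size img_uniq img_sub; rewrite /= size_map.
Qed.

Lemma weyl_length_mul_refl :
  (weyl_length roots pos w < weyl_length roots pos (w *m refl_mx (b *m w)))%N.
Proof.
have count_split p : count p pos =
    (count (predI inv_refl p) pos + count (predI (predC inv_refl) p) pos)%N.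
  by rewrite -!count_filter count_predC size_filter.
have xorE : count (fun x => inv_refl x (+) inv_w x) pos =
    (count (predI inv_refl (predC inv_w)) pos +
     count (predI (predC inv_refl) inv_w) pos)%N.
  by rewrite count_split; congr (_ + _)%N; apply: eq_count => x /=; case: (inv_refl x).
have -> : weyl_length roots pos w = count inv_w pos by [].
by rewrite weyl_length_refl xorE (count_split inv_w) ltn_add2r inversions_count_lt.
Qed.

End LengthIncrease.

Section DominantWeight.
Variables (l lp : V) (w0 : 'M[R]_n).
Hypotheses (roots_uniq : uniq roots) (w0_weyl : in_weyl roots w0)
  (lp_dominant : forall a, a \in pos -> 0 <= pairing lp a) (lp_w0 : lp *m w0 = l)
  (w0_max : forall w, in_weyl roots w -> lp *m w = l -> bruhat_le roots pos w w0).

Lemma pairing_w0 a : pairing l (a *m w0) = pairing lp a.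
Proof. by rewrite -lp_w0 in_weyl_pairing. Qed.

Lemma pairing_w0_neq0 b : b \in pos -> b *m w0 \in pos -> pairing l (b *m w0) != 0.
Proof.
move=> b_pos bw_pos; apply/eqP => l_bw.
have w_weyl := in_weyl_mulr w0_weyl (pos_root bw_pos).
have lp_w : lp *m (w0 *m refl_mx (b *m w0)) = l.
  by rewrite mulmxA lp_w0 reflE l_bw scale0r subr0.
have := weyl_length_bruhat (w0_max w_weyl lp_w).
by rewrite leqNgt weyl_length_mul_refl.
Qed.

Lemma w0_preimage_pos x : x \in roots -> 0 < pairing l x ->
  exists2 b, b \in pos & b *m w0 = x.
Proof.
move=> x_root l_x; have [b b_root bw] := in_weyl_onto w0_weyl roots_uniq x_root.
exists b => //; apply: contraTT l_x; rewrite notin_posE // => /lp_dominant.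
by rewrite -bw pairing_w0 pairingNr oppr_ge0 -leNgt.
Qed.

Lemma act_set_w0E x : (x \in act_set w0 pos) =
  [|| posgt0 pos l x, poslt0 pos l (- x) | poseq0 pos l (- x)].
Proof.
rewrite /posgt0 /poslt0 /poseq0 pairingNr oppr_lt0 oppr_eq0.
apply/mapP/idP => [[a a_pos ->] | ].
  have := lp_dominant a_pos; rewrite -pairing_w0 le_eqVlt.
  have aw_root := in_weyl_root w0_weyl (pos_root a_pos).
  have [aw_pos | ] := boolP (a *m w0 \in pos).
    by rewrite eq_sym (negbTE (pairing_w0_neq0 a_pos aw_pos)) => /= ->.
  rewrite notin_posE // => -> /=.
  by case/orP=> [/eqP <-|->]; rewrite ?eqxx ?orbT.
case/or3P => /andP[x_pos l_x].
- by have [b] := w0_preimage_pos (pos_root x_pos) l_x; exists b.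
- have x_root : x \in roots by rewrite -[x]opprK rootN ?pos_root.
  by have [b] := w0_preimage_pos x_root l_x; exists b.
have [b b_root bw] := in_weyl_onto w0_weyl roots_uniq (pos_root x_pos).
have b_npos : b \notin pos.
  apply/negP => b_pos; have := pairing_w0_neq0 b_pos.
  by rewrite bw x_pos pairingNr oppr_eq0 l_x => /(_ isT).
by exists (- b); rewrite -?notin_posE // mulNmx bw opprK.
Qed.

End DominantWeight.

End WeylGroup.

Section InducedOrder.
Variables (R : realFieldType) (n : nat) (pos : seq 'rV[R]_n) (l : 'rV[R]_n).
Variable w0 : 'M[R]_n.
Local Notation V := 'rV[R]_n.
Local Notation W := (act_set w0 pos).
Local Notation gt0 := (posgt0 pos l).
Local Notation lt0 := (poslt0 pos l).
Local Notation eq0 := (poseq0 pos l).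
Hypotheses (pos_uniq : uniq pos) (pos_pointed : pointed pos).
Hypotheses (W_uniq : uniq W) (W_pointed : pointed W)
  (W_mem : forall x, (x \in W) = [|| gt0 x, lt0 (- x) | eq0 (- x)]).
Implicit Types (s t : seq V) (x y : V).

Definition induced_order_inv t :=
  [seq - x | x <- filter (predC gt0) t] ++ filter gt0 t.

Lemma posgt0_pos x : gt0 x -> x \in pos. Proof. by case/andP. Qed.
Lemma poslt0_pos x : lt0 x -> x \in pos. Proof. by case/andP. Qed.
Lemma poseq0_pos x : eq0 x -> x \in pos. Proof. by case/andP. Qed.

Lemma mem_posE x : (x \in pos) = [|| gt0 x, lt0 x | eq0 x].
Proof. by rewrite /posgt0 /poslt0 /poseq0; case: (x \in pos) => //=; case: ltrgtP. Qed.

Lemma negb_posgt0 x : x \in pos -> ~~ gt0 x = lt0 x || eq0 x.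
Proof. by rewrite /posgt0 /poslt0 /poseq0 => ->; rewrite -leNgt le_eqVlt orbC. Qed.

Lemma posgt0_notle0 x : gt0 x -> ~~ (lt0 x || eq0 x).
Proof. by move=> gt0x; rewrite -negb_posgt0 ?posgt0_pos ?negbK. Qed.

Lemma poslt0_poseq0 x : lt0 x -> ~~ eq0 x.
Proof. by rewrite /poslt0 /poseq0 => /andP[_ /lt_eqF ->]; rewrite andbF. Qed.

Lemma posgt0_opp x : x \in pos -> ~~ gt0 (- x).
Proof. by move=> /(pos_pointed.1 x); apply: contraNN => /posgt0_pos. Qed.

Lemma mem_filter_posgt0 s x : s =i pos -> (x \in filter gt0 s) = gt0 x.
Proof. by move=> sE; rewrite mem_filter sE andb_idr // => /posgt0_pos. Qed.

Lemma mem_filter_notposgt0 s x : s =i pos ->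
  (x \in filter (predC gt0) s) = lt0 x || eq0 x.
Proof.
move=> sE; rewrite mem_filter sE /=.
apply/andP/idP => [[ngt0 x_pos]|le0]; first by rewrite -negb_posgt0.
have x_pos : x \in pos by case/orP: le0 => /andP[].
by rewrite negb_posgt0.
Qed.

Lemma memN_filter_notposgt0 t x : t =i W ->
  (- x \in filter (predC gt0) t) = lt0 x || eq0 x.
Proof.
move=> tE; rewrite mem_filter tE W_mem opprK /=.
have [/posgt0_pos/pos_pointed.1|] := boolP (gt0 (- x)); last by rewrite orFb.
rewrite opprK => x_npos; apply/esym/negbTE.
by apply: contra x_npos => /orP[/poslt0_pos|/poseq0_pos].
Qed.

Lemma all_notposgt0_mapN s : {subset s <= pos} -> all (predC gt0) [seq - x | x <- s].
Proof. by move=> s_pos; apply/allP => _ /mapP[x /s_pos ? ->]; exact: posgt0_opp. Qed.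

Lemma all_notposgt0_negpart t : t =i W ->
  all (predC gt0) [seq - x | x <- filter (predC gt0) t].
Proof.
move=> tE; apply/allP => x; rewrite mem_mapN memN_filter_notposgt0 //= => le0x.
by rewrite negb_posgt0 // mem_posE le0x orbT.
Qed.

Lemma has_notposgt0_filter s : ~~ has (predC gt0) (filter gt0 s).
Proof. by rewrite has_predC negbK filter_all. Qed.

Lemma RO_pos_split s : RO_pos pos l s -> filter (predC gt0) s ++ filter gt0 s = s.
Proof.
case=> -[[s_uniq /perm_mem sE] _] [_ [_ [eq_gt lt_gt]]].
rewrite -[in X in _ ++ X](@eq_filter _ (predC (predC gt0))) => [|x]; last exact: negbK.
apply: cat_filterC => // x y; rewrite sE => x_pos _ /= ngt0x /negPn gt0y.
by case/orP: (etrans (esym (negb_posgt0 x_pos)) ngt0x) => [/lt_gt|/eq_gt]; apply.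
Qed.

Lemma RO_w_split t : RO_w pos l w0 t -> filter gt0 t ++ filter (predC gt0) t = t.
Proof.
case=> -[[t_uniq /perm_mem tE] _] [_ [gt_lt [_ gt_eq]]].
apply: cat_filterC => // x y _; rewrite tE W_mem => /or3P[-> //|lt0y|eq0y] gt0x _.
  by rewrite -[y]opprK gt_lt.
by rewrite -[y]opprK gt_eq.
Qed.

Lemma induced_orderE s : uniq s -> s =i pos ->
  {in s &, forall x y, lt0 x -> eq0 y -> prec s x y} ->
  induced_order pos l s = filter gt0 s ++ [seq - x | x <- filter (predC gt0) s].
Proof.
move=> s_uniq sE lt_eq; rewrite /induced_order -map_cat; congr (_ ++ map _ _).
set u := filter (predC gt0) s.
rewrite -(cat_filterC (p := lt0) (s := u)) ?filter_uniq //.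
  rewrite -!filter_predI; congr (_ ++ _); apply: eq_in_filter => x.
    by rewrite sE => x_pos /=; rewrite negb_posgt0 //; case: (lt0 x).
  rewrite sE => x_pos /=; rewrite negb_posgt0 //; case lt0x: (lt0 x) => //=.
  by rewrite (negbTE (poslt0_poseq0 lt0x)).
move=> x y x_u y_u lt0x nlt0y.
have := y_u; rewrite mem_filter_notposgt0 // (negbTE nlt0y) => eq0y.
move: x_u y_u; rewrite !mem_filter => /andP[ngt0x xs] /andP[ngt0y ys].
by rewrite prec_filter // lt_eq.
Qed.

Lemma RO_pos_induced_orderE s : RO_pos pos l s ->
  induced_order pos l s = filter gt0 s ++ [seq - x | x <- filter (predC gt0) s].
Proof.
case=> -[[s_uniq /perm_mem sE] _] [_ [lt_eq _]].
by apply: induced_orderE => // x y _ _; exact: lt_eq.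
Qed.

Lemma induced_order_RO s : RO_pos pos l s -> RO_w pos l w0 (induced_order pos l s).
Proof.
move=> s_RO; rewrite RO_pos_induced_orderE //; have s_split := RO_pos_split s_RO.
case: s_RO => s_order [_ [lt_eq _]]; have [[_ /perm_mem sE] _] := s_order.
set u := filter (predC gt0) s in s_split *; set v := filter gt0 s in s_split *.
have t_order : reflection_order (v ++ [seq - x | x <- u]) (v ++ [seq - x | x <- u]).
  by apply: (reflection_order_rotate pos_pointed); rewrite s_split.
have v_first c a : gt0 c -> lt0 a || eq0 a -> prec (v ++ [seq - x | x <- u]) c (- a).
  move=> gt0c le0a; rewrite prec_cat_lr ?mem_filter_posgt0 //.
  by apply: posgt0_opp; case/orP: le0a => [/poslt0_pos|/poseq0_pos].
have u_prec a b : lt0 a -> eq0 b -> prec (v ++ [seq - x | x <- u]) (- a) (- b).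
  move=> lt0a eq0b; have a_pos := poslt0_pos lt0a; have b_pos := poseq0_pos eq0b.
  rewrite prec_catr ?mem_filter_posgt0 ?posgt0_opp // prec_mapN !opprK.
  by rewrite prec_filter ?lt_eq //= negb_posgt0 ?lt0a ?eq0b ?orbT.
split.
  apply: reflection_order_perm (t_order); apply: uniq_perm => //.
    by case: t_order => -[].
  by move=> x; rewrite W_mem mem_cat mem_mapN mem_filter_posgt0 // mem_filter_notposgt0.
split; first by move=> c a b gt0c lt0a eq0b; rewrite v_first ?lt0a ?u_prec.
split; first by move=> c a gt0c lt0a; rewrite v_first ?lt0a.
by split=> [|c b gt0c eq0b]; [exact: u_prec | rewrite v_first ?eq0b ?orbT].
Qed.

Lemma induced_orderK s : RO_pos pos l s ->
  induced_order_inv (induced_order pos l s) = s.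
Proof.
move=> s_RO; rewrite RO_pos_induced_orderE // /induced_order_inv.
have u_pos : {subset filter (predC gt0) s <= pos}.
  by case: s_RO => -[[_ /perm_mem sE] _] _ x; rewrite mem_filter sE => /andP[].
rewrite (filter_cat_l (p := gt0)) ?filter_all -?all_predC ?all_notposgt0_mapN //.
rewrite (filter_cat_r (p := predC gt0)) ?has_notposgt0_filter ?all_notposgt0_mapN //.
by rewrite (mapK opprK) RO_pos_split.
Qed.

Lemma mem_induced_order_inv t : t =i W -> induced_order_inv t =i pos.
Proof.
move=> tE x; rewrite (mem_posE x) mem_cat mem_mapN memN_filter_notposgt0 //.
by rewrite mem_filter tE W_mem; case: (gt0 x); rewrite ?orbT ?orbF.
Qed.

Lemma induced_order_inv_RO t : RO_w pos l w0 t -> RO_pos pos l (induced_order_inv t).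
Proof.
move=> t_RO; have t_split := RO_w_split t_RO.
case: t_RO => t_order [_ [_ [lt_eq _]]]; have [[_ /perm_mem tE] _] := t_order.
set v := filter gt0 t in t_split *; set tn := filter (predC gt0) t in t_split *.
have sE : induced_order_inv t = [seq - x | x <- tn] ++ v by [].
have tn_mem x : (x \in [seq - x | x <- tn]) = lt0 x || eq0 x.
  by rewrite mem_mapN memN_filter_notposgt0.
have tn_first a c : lt0 a || eq0 a -> gt0 c -> prec (induced_order_inv t) a c.
  by move=> le0a gt0c; rewrite sE prec_cat_lr ?tn_mem ?posgt0_notle0.
have tn_prec a b : lt0 a -> eq0 b -> prec (induced_order_inv t) a b.
  move=> lt0a eq0b; rewrite sE prec_catl ?tn_mem ?lt0a ?eq0b ?orbT // prec_mapN.
  rewrite prec_filter ?lt_eq //=; apply: posgt0_opp.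
    exact: poslt0_pos.
  exact: poseq0_pos.
split.
  have: reflection_order (rev (induced_order_inv t)) (induced_order_inv t).
    have := reflection_order_rev t_order; rewrite -{1}t_split rev_cat.
    move=> /(reflection_order_rotate W_pointed); rewrite map_rev -rev_cat.
    by move=> /reflection_order_rev; rewrite revK.
  move=> s_order; apply: reflection_order_perm (s_order); apply: uniq_perm => //.
    by case: s_order => -[]; rewrite rev_uniq.
  by move=> x; rewrite mem_rev mem_induced_order_inv.
split; first by move=> a b c lt0a eq0b gt0c; rewrite tn_prec ?tn_first ?eq0b ?orbT.
split; first exact: tn_prec.
by split=> [b c eq0b|a c lt0a]; apply: tn_first; rewrite ?eq0b ?lt0a ?orbT.
Qed.

Lemma induced_order_invK t : RO_w pos l w0 t ->
  induced_order pos l (induced_order_inv t) = t.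
Proof.
move=> t_RO; have tE : t =i W by case: t_RO => -[[_ /perm_mem]].
have [[[s_uniq /perm_mem sE] _] [_ [lt_eq _]]] := induced_order_inv_RO t_RO.
rewrite induced_orderE // => [|x y _ _]; last exact: lt_eq.
rewrite /induced_order_inv (filter_cat_r (p := gt0)) ?filter_all //; last first.
  by rewrite -all_predC all_notposgt0_negpart.
rewrite (filter_cat_l (p := predC gt0)) ?has_notposgt0_filter ?all_notposgt0_negpart //.
by rewrite (mapK opprK) RO_w_split.
Qed.

End InducedOrder.

Theorem proposition2p12 (R : realFieldType) (n : nat)
    (roots pos : seq 'rV[R]_n) (l lp : 'rV[R]_n) (w0 : 'M[R]_n) :
  simple_root_system roots ->
  positive_system roots pos ->
  in_weight_lattice roots l ->
  (* lp = lambda_+ : the dominant weight in W lambda *)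
  (forall a, a \in pos -> 0 <= pairing lp a) ->
  (exists2 u, in_weyl roots u & lp = l *m u) ->
  (* w0 = w(lambda) : the Bruhat-maximum of {w in W | w lambda_+ = lambda} *)
  in_weyl roots w0 -> lp *m w0 = l ->
  (forall w, in_weyl roots w -> lp *m w = l -> bruhat_le roots pos w w0) ->
  [/\ (forall s, RO_pos pos l s -> RO_w pos l w0 (induced_order pos l s)),
      (forall s1 s2, RO_pos pos l s1 -> RO_pos pos l s2 ->
         induced_order pos l s1 = induced_order pos l s2 -> s1 = s2)
    & (forall t, RO_w pos l w0 t ->
         exists2 s, RO_pos pos l s & induced_order pos l s = t)].
Proof.
move=> [[roots_uniq _ roots_neq0] [_ [roots_refl _]]] [pos_uniq [f [f_reg pos_def]]] _
  lp_dominant _ w0_weyl lp_w0 w0_max.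
have W_mem := act_set_w0E roots_neq0 roots_refl pos_uniq pos_def f_reg roots_uniq
  w0_weyl lp_dominant lp_w0 w0_max.
have pos_pointed := pos_pointed pos_def.
have W_pointed := act_set_pointed roots_neq0 w0_weyl pos_pointed.
have W_uniq : uniq (act_set w0 pos).
  by rewrite map_inj_uniq //; exact: in_weyl_inj w0_weyl.
split.
- by move=> s; apply: induced_order_RO.
- move=> s1 s2 s1_RO s2_RO e.
  by rewrite -(induced_orderK pos_pointed s1_RO) e induced_orderK.
- move=> t t_RO; exists (induced_order_inv pos l t).
    exact: induced_order_inv_RO t_RO.
  exact: induced_order_invK t_RO.
Qed.
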